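(* Let $s\ge2$ and let $\mathcal{C}$ be an $[n,k,d]_q$ linear code with multiple $(r_i,\delta_i)_{i\in[s]}$ localities with respect to a partition $\mathcal{T}_1,\dots,\mathcal{T}_s$ of $[n]$, $n_i=|\mathcal{T}_i|$, $r_1\le\dots\le r_s$, $\delta_1\ge\dots\ge\delta_s\ge2$. Let $\Delta_0=0$ and $\Delta_j=\sum_{i=1}^{j}\lceil n_i/(r_i+\delta_i-1)\rceil(\delta_i-1)$ for $j=1,\dots,s-1$. Suppose $\sum_{i=1}^{s-1}r_i\lceil n_i/(r_i+\delta_i-1)\rceil\le k-1$ and, for each $j=1,\dots,s-1$, $$r_j\left\lceil\frac{\Delta_j-\Delta_{j-1}-1}{\delta_j-1}\right\rceil+(\Delta_j-\Delta_{j-1}-1)<n_j.$$ Then: (i) for $j=1,\dots,s-1$ and $\Delta_{j-1}\le x\le\Delta_j$, $$\Phi(x)\le\sum_{i=1}^{j-1}r_i\left\lceil\frac{n_i}{r_i+\delta_i-1}\right\rceil+r_j\left\lceil\frac{x-\Delta_{j-1}}{\delta_j-1}\right\rceil+x;$$ (ii) for $\Delta_{s-1}\le x\le\rho+1$, $$\Phi(x)\le\sum_{i=1}^{s-1}r_i\left\lceil\frac{n_i}{r_i+\delta_i-1}\right\rceil+r_s\left\lceil\frac{x-\Delta_{s-1}}{\delta_s-1}\right\rceil+x,$$ where $\rho=\max\{x:\Phi(x)-x<k\}$.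
   Context: $[n]=\{1,\dots,n\}$. For an $[n,k,d]_q$ linear code $\mathcal{C}$ with generator matrix columns $\vec g_1,\dots,\vec g_n$, a regenerating set of coordinate $i$ is a subset $R\subseteq[n]$ with $i\in R$ such that $\vec g_i$ is an $\mathbb{F}_q$-linear combination of $\{\vec g_j\}_{j\in R\setminus\{i\}}$; regenerating sets are taken to be minimal (no proper subset of $R\setminus\{i\}$ suffices). $\mathcal{R}_i$ is the collection of regenerating sets of coordinate $i$. A sequence $R_1,\dots,R_m$ with $R_t\in\mathcal{R}_{l_t}$, $l_t\in[n]$, has a nontrivial union if $l_j\notin\bigcup_{t<j}R_t$ for all $j$. $\Phi(0)=0$ and for $x\ge1$, $\Phi(x)=\min\{|\bigcup_{t=1}^xR_t|: R_t\in\mathcal{R}_{l_t},\ R_1,\dots,R_x \text{ have a nontrivial union}\}$. Multiple $(r_i,\delta_i)_{i\in[s]}$ localities: $\mathcal{T}_1,\dots,\mathcal{T}_s$ is a partition of $[n]$, $r_1\le\dots\le r_s$ and $\delta_1\ge\dots\ge\delta_s\ge2$ are integers, and for each $i\in[s]$ and each $\iota\in\mathcal{T}_i$ there is $S_\iota\subseteq\mathcal{T}_i$ with $\iota\in S_\iota$, $\delta_i\le|S_\iota|\le r_i+\delta_i-1$, such that for every $E\subseteq S_\iota$ with $|E|=\delta_i-1$ and every $j\in E$, $(S_\iota\setminus E)\cup\{j\}\in\mathcal{R}_j$. *)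

From HB Require Import structures.
From mathcomp Require Import all_boot all_order all_algebra.
Set Implicit Arguments. Unset Strict Implicit. Unset Printing Implicit Defensive.
Import GRing.Theory.
Local Open Scope ring_scope.

(* Linear code of length n, dimension k over a finite field F, given by a
   generator matrix G : 'M[F]_(k, n) of rank k; columns g_j = col j G. *)

Definition in_span (F : finFieldType) (k n : nat) (G : 'M[F]_(k, n))
    (S : {set 'I_n}) (i : 'I_n) : bool :=
  [exists c : {ffun 'I_n -> F}, col i G == \sum_(j in S) c j *: col j G].

Definition regen (F : finFieldType) (k n : nat) (G : 'M[F]_(k, n))
    (i : 'I_n) (R : {set 'I_n}) : bool :=
  [&& i \in R, in_span G (R :\ i) i &
      [forall S : {set 'I_n}, (S \proper (R :\ i)) ==> ~~ in_span G S i]].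

Definition nontriv_union (F : finFieldType) (k n : nat) (G : 'M[F]_(k, n))
    (x : nat) (t : x.-tuple ('I_n * {set 'I_n})) : bool :=
  [forall j : 'I_x, regen G (tnth t j).1 (tnth t j).2 &&
     ((tnth t j).1 \notin \bigcup_(u < x | (u < j)%N) (tnth t u).2)].

Definition seq_union (n x : nat) (t : x.-tuple ('I_n * {set 'I_n})) :
  {set 'I_n} := \bigcup_(u < x) (tnth t u).2.

Definition Phi_defined (F : finFieldType) (k n : nat) (G : 'M[F]_(k, n))
    (x : nat) : bool :=
  [exists t : x.-tuple ('I_n * {set 'I_n}), nontriv_union G t].

(* Phi(x) = min |union|; the default n is never below an actual value,
   so when Phi_defined holds this is the true minimum. *)
Definition Phi (F : finFieldType) (k n : nat) (G : 'M[F]_(k, n))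
    (x : nat) : nat :=
  \big[minn/n]_(t : x.-tuple ('I_n * {set 'I_n}) | nontriv_union G t)
     #|seq_union t|.

(* rho = max { x : Phi(x) - x < k }; any x with Phi defined satisfies x <= n. *)
Definition rho (F : finFieldType) (k n : nat) (G : 'M[F]_(k, n)) : nat :=
  \max_(x < n.+1 | Phi_defined G x && (Phi G x - x < k)%N) x.

Definition cdiv (a b : nat) : nat := ((a + b.-1) %/ b)%N.

(* T_0,...,T_{s-1} (0-based) is a partition of [n] into nonempty blocks *)
Definition is_partition (n s : nat) (T : nat -> {set 'I_n}) : Prop :=
  [/\ forall j : 'I_n, exists2 i, (i < s)%N & j \in T i,
      forall i i', (i < s)%N -> (i' < s)%N -> i <> i' -> [disjoint T i & T i'] &
      forall i, (i < s)%N -> T i != set0].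

Definition multi_locality (F : finFieldType) (k n : nat) (G : 'M[F]_(k, n))
    (s : nat) (T : nat -> {set 'I_n}) (r delta : nat -> nat) : Prop :=
  forall i, (i < s)%N -> forall iota, iota \in T i ->
    exists S : {set 'I_n},
      [/\ S \subset T i, iota \in S, (delta i <= #|S|)%N,
          (#|S| <= r i + delta i - 1)%N &
          forall E : {set 'I_n}, E \subset S -> #|E| = (delta i - 1)%N ->
            forall j, j \in E -> regen G j ((S :\: E) :|: [set j])].

Definition nblk (n : nat) (T : nat -> {set 'I_n}) (r delta : nat -> nat)
    (i : nat) : nat := cdiv #|T i| (r i + delta i - 1).

(* Delta j = sum_{i < j} c_i (delta_i - 1)  (0-based: Delta j = paper's Delta_j) *)
Definition Delta (n : nat) (T : nat -> {set 'I_n}) (r delta : nat -> nat)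
    (j : nat) : nat := (\sum_(i < j) nblk T r delta i * (delta i - 1))%N.

Definition Rsum (n : nat) (T : nat -> {set 'I_n}) (r delta : nat -> nat)
    (j : nat) : nat := (\sum_(i < j) r i * nblk T r delta i)%N.

From mathcomp Require Import all_boot all_order all_algebra zify.
Set Implicit Arguments. Unset Strict Implicit. Unset Printing Implicit Defensive.
Import Order.TTheory GRing.Theory.

(* Inside a locality group S, with |S| <= r + delta - 1 and any delta - 1 of its
   coordinates regenerable from the rest of S, delta - 1 uncovered coordinates can
   be appended to a sequence with nontrivial union at the cost of at most r further
   covered positions; when fewer than delta - 1 coordinates of S are uncovered they
   are appended for free.  Exhausting T_1, ..., T_{j-1} and then appending
   x - Delta_{j-1} coordinates of T_j gives (i); the hypothesis on n_j guarantees an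
   uncovered coordinate of T_j at every step.  For (ii) the groups of all blocks are
   used, since r_i <= r_s and delta_i >= delta_s; there is room as long as the bound
   is below n, and Phi(x) <= n anyway.  Phi is defined up to rho + 1 by a rank
   argument: every column is spanned by the columns outside l_1, ..., l_x, so
   x <= n - k, and a longest sequence covers [n], so that rho is below its length. *)

Lemma leq_cdiv2r b a a' : a <= a' -> cdiv a b <= cdiv a' b.
Proof. by move=> le_aa'; rewrite /cdiv leq_div2r // leq_add2r. Qed.

Lemma leq_mul_cdiv q y b : 0 < b -> q * b <= y -> q <= cdiv y b.
Proof. by move=> b_gt0 le_qy; rewrite /cdiv leq_divRL //; lia. Qed.

Lemma ltn_mul_cdiv q y b : 0 < b -> q * b < y -> q < cdiv y b.
Proof. by move=> b_gt0 lt_qy; rewrite /cdiv leq_divRL // mulSn; lia. Qed.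

Lemma cdiv_mulnK c b : 0 < b -> cdiv (c * b) b = c.
Proof.
move=> b_gt0; apply/eqP; rewrite eqn_leq leq_mul_cdiv // andbT.
by rewrite -ltnS ltn_divLR // mulSn; lia.
Qed.

Lemma exists_subset_card (T : finType) (A : {set T}) m :
  m <= #|A| -> exists2 E : {set T}, E \subset A & #|E| = m.
Proof.
case/card_geqP=> e [e_uniq <- eA]; exists [set x in e].
  by apply/subsetP=> x; rewrite inE => /eA.
by rewrite cardsE (card_uniqP e_uniq).
Qed.

Lemma exists_subset_between (T : finType) (A B : {set T}) m :
  A \subset B -> #|A| <= m <= #|B| ->
  exists E : {set T}, [/\ A \subset E, E \subset B & #|E| = m].
Proof.
move=> AB /andP[Am mB].
have [|E0] := @exists_subset_card _ (B :\: A) (m - #|A|).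
  by rewrite cardsDS //; lia.
rewrite subsetD => /andP[E0B E0A] E0_card.
exists (A :|: E0); rewrite subsetUl subUset AB E0B; split=> //.
have := cardsUI A E0; rewrite disjoint_setI0 1?disjoint_sym // cards0; lia.
Qed.

Lemma exists_uncovered (T : finType) (U0 U Reg : {set T}) :
  U0 \subset U -> #|U| < #|U0| + #|Reg :\: U0| -> exists2 i, i \in Reg & i \notin U.
Proof.
move=> U0U U_lt; case: (boolP (Reg \subset U)) => [RegU | /subsetPn //].
have := subset_leq_card (setSD U0 RegU); rewrite [#|U :\: U0|]cardsDS //.
have := subset_leq_card U0U; lia.
Qed.

Section NontrivialSequences.
Variables (F : finFieldType) (k n : nat) (G : 'M[F]_(k, n)).
Local Notation pair := ('I_n * {set 'I_n})%type.

Definition covered (s : seq pair) : {set 'I_n} := \bigcup_(z <- s) z.2.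

Fixpoint nontriv_seq (A : {set 'I_n}) (s : seq pair) : bool :=
  if s is z :: s' then
    [&& regen G z.1 z.2, z.1 \notin A & nontriv_seq (A :|: z.2) s']
  else true.

Lemma covered_nil : covered [::] = set0.
Proof. by rewrite /covered big_nil. Qed.

Lemma covered_cons z s : covered (z :: s) = z.2 :|: covered s.
Proof. by rewrite /covered big_cons. Qed.

Lemma covered_cat s b : covered (s ++ b) = covered s :|: covered b.
Proof. by rewrite /covered big_cat. Qed.

Lemma nontriv_seq_cat A s b :
  nontriv_seq A (s ++ b) = nontriv_seq A s && nontriv_seq (A :|: covered s) b.
Proof.
elim: s A => [|z s IH] A /=; first by rewrite covered_nil setU0.
by rewrite IH covered_cons setUA !andbA.
Qed.

Lemma nontriv_seqP (z0 : pair) A s :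
  reflect (forall j, j < size s ->
             regen G (nth z0 s j).1 (nth z0 s j).2 /\
             (nth z0 s j).1 \notin A :|: covered (take j s))
          (nontriv_seq A s).
Proof.
elim: s A => [|z s IH] A /=; first by apply: ReflectT.
apply: (iffP and3P) => [[zR zA /IH s_ok] [|j] /= j_lt|s_ok].
- by rewrite covered_nil setU0.
- by rewrite covered_cons setUA; exact: s_ok.
- have [zR] := s_ok 0 isT; rewrite /= covered_nil setU0 => zA.
  split=> //; apply/IH => j j_lt.
  by have := s_ok j.+1 j_lt; rewrite /= covered_cons setUA.
Qed.

Lemma bigcup_tnth_take (z0 : pair) x (t : x.-tuple pair) j : j <= x ->
  \bigcup_(u < x | u < j) (tnth t u).2 = covered (take j t).
Proof.
move=> j_le; rewrite /covered (big_nth z0) size_takel ?size_tuple // big_mkord.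
rewrite (big_ord_widen x (fun u => (nth z0 (take j t) u).2) j_le).
by apply: eq_bigr => u u_lt; rewrite nth_take // (tnth_nth z0).
Qed.

Lemma nontriv_unionE x (t : x.-tuple pair) :
  nontriv_union G t = nontriv_seq set0 t.
Proof.
case: x t => [|x] t; first by rewrite (tuple0 t); apply/forallP => -[].
(* [have] keeps [z0] opaque, so that rewriting with [tnth_nth z0] terminates. *)
have z0 := tnth t ord0.
apply/forallP/(nontriv_seqP z0) => t_ok j; rewrite ?size_tuple.
- move=> j_lt; have /andP[] := t_ok (Ordinal j_lt).
  by rewrite set0U -bigcup_tnth_take ?(tnth_nth z0) // ltnW.
- rewrite (tnth_nth z0); case: (t_ok j) => [|-> /=]; first by rewrite size_tuple.
  by rewrite set0U -bigcup_tnth_take // ltnW.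
Qed.

Lemma seq_unionE x (t : x.-tuple pair) : seq_union t = covered t.
Proof. by rewrite /seq_union /covered big_tuple. Qed.

Lemma Phi_le_covered s : nontriv_seq set0 s ->
  Phi_defined G (size s) /\ Phi G (size s) <= #|covered s|.
Proof.
rewrite -[s]/(tval (in_tuple s)) -nontriv_unionE => s_ok.
split; first by apply/existsP; exists (in_tuple s).
by rewrite -seq_unionE; exact: (@bigmin_le_cond _ nat).
Qed.

Lemma Phi_le_n x : Phi G x <= n.
Proof. by rewrite /Phi (@bigmin_idl _ nat) geq_minl. Qed.

End NontrivialSequences.

Section RankBound.
Variables (F : finFieldType) (k n : nat) (G : 'M[F]_(k, n)).

Definition colspace (S : {set 'I_n}) : 'M[F]_k :=
  (\sum_(j in S) <<trmx (col j G)>>)%MS.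

Lemma col_sub_colspace (S : {set 'I_n}) j :
  j \in S -> (trmx (col j G) <= colspace S)%MS.
Proof. by move=> jS; apply: (sumsmx_sup j) => //; rewrite genmxE. Qed.

Lemma in_span_sub_colspace (S : {set 'I_n}) i :
  in_span G S i -> (trmx (col i G) <= colspace S)%MS.
Proof.
case/existsP=> a /eqP ->; rewrite linear_sum; apply: summx_sub => j jS.
by rewrite linearZ scalemx_sub ?col_sub_colspace.
Qed.

Lemma colspaceS (S S' : {set 'I_n}) :
  S \subset S' -> (colspace S <= colspace S')%MS.
Proof.
move/subsetP=> SS'; apply/sumsmx_subP => j jS.
by rewrite genmxE col_sub_colspace ?SS'.
Qed.

Lemma rank_colspace (S : {set 'I_n}) : \rank (colspace S) <= #|S|.
Proof.
rewrite /colspace -sum1_card.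
apply: (big_ind2 (fun (M : 'M[F]_k) m => \rank M <= m)) => [|A1 m1 A2 m2 le1 le2|j _].
- by rewrite mxrank0.
- exact: leq_trans (mxrank_adds_leqif A1 A2) (leq_add le1 le2).
- by rewrite mxrank_gen rank_leq_row.
Qed.

Lemma nontriv_seq_avoid A s :
  nontriv_seq G A s -> {in unzip1 s, forall i, i \notin A}.
Proof.
elim: s A => [|[l R] s IH] A //= /and3P[_ lA s_ok] i.
rewrite inE => /predU1P[-> //|/(IH _ s_ok)].
by rewrite in_setU negb_or => /andP[].
Qed.

Lemma nontriv_seq_uniq A s : nontriv_seq G A s -> uniq (unzip1 s).
Proof.
elim: s A => [|[l R] s IH] A //= /and3P[/and3P[lR _ _] _ s_ok].
rewrite (IH _ s_ok) andbT; apply/negP => /(nontriv_seq_avoid s_ok).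
by rewrite in_setU lR orbT.
Qed.

Lemma nontriv_seq_col_sub A s i : nontriv_seq G A s ->
  (trmx (col i G) <= colspace (~: [set j in unzip1 s]))%MS.
Proof.
elim: s A => [|[l R] s IH] A /=; first by rewrite col_sub_colspace // !inE.
case/and3P=> lR _ s_ok; apply: submx_trans (IH _ s_ok) _.
apply/sumsmx_subP => j; rewrite genmxE !inE => js.
have [->|jl] := eqVneq j l; last by rewrite col_sub_colspace // !inE negb_or jl.
case/and3P: lR => _ /in_span_sub_colspace lRl _; apply: submx_trans lRl (colspaceS _).
apply/subsetP=> x; rewrite !inE => /andP[xl xR]; rewrite negb_or xl /=.
by apply/negP=> /(nontriv_seq_avoid s_ok); rewrite in_setU xR orbT.
Qed.

Lemma nontriv_seq_size A s : nontriv_seq G A s -> size s + \rank G <= n.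
Proof.
move=> s_ok; set L := [set j in unzip1 s].
have L_card : #|L| = size s.
  by rewrite cardsE (card_uniqP (nontriv_seq_uniq s_ok)) size_map.
have GL : (trmx G <= colspace (~: L))%MS.
  by apply/row_subP => i; rewrite -tr_col; exact: nontriv_seq_col_sub s_ok.
have := leq_trans (mxrankS GL) (rank_colspace _); rewrite mxrank_tr.
have := cardsC L; rewrite card_ord L_card => cardL rankL.
by apply: leq_trans (leq_add (leqnn _) rankL) _; rewrite cardL.
Qed.

Lemma Phi_defined_size x : Phi_defined G x -> x + \rank G <= n.
Proof.
by case/existsP=> t; rewrite nontriv_unionE => /nontriv_seq_size; rewrite size_tuple.
Qed.

Lemma Phi_definedW x y : y <= x -> Phi_defined G x -> Phi_defined G y.
Proof.
move=> yx /existsP[t]; rewrite nontriv_unionE -(cat_take_drop y t) nontriv_seq_cat.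
case/andP=> /Phi_le_covered[+ _]; by rewrite size_takel ?size_tuple.
Qed.

Lemma Phi_defined_upto_rho x : \rank G = k -> 0 < n ->
  (forall i, exists R, regen G i R) -> x <= (rho G).+1 -> Phi_defined G x.
Proof.
move=> rankG n_gt0 regenP x_le.
have Phi0 : Phi_defined G 0 by have [] := @Phi_le_covered _ _ _ G [::] isT.
have [m Phim m_max] := ex_maxnP (ex_intro _ 0 Phi0)
  (fun x Px => leq_trans (leq_addr _ _) (Phi_defined_size Px)).
have cover_all (t : m.-tuple ('I_n * {set 'I_n})) :
    nontriv_seq G set0 t -> covered t = setT.
  move=> t_ok; apply/eqP; rewrite eqEsubset subsetT /=.
  apply/subsetP => i _; apply/negPn/negP => iN; have [R iR] := regenP i.
  have := @Phi_le_covered _ _ _ G (t ++ [:: (i, R)]).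
  rewrite nontriv_seq_cat t_ok /= iR set0U iN => /(_ isT) [/m_max].
  by rewrite size_cat size_tuple addn1 ltnn.
have Phim_n : n <= Phi G m.
  apply/(@bigmin_geP _ nat); split=> // t.
  by rewrite nontriv_unionE seq_unionE => /cover_all ->; rewrite cardsT card_ord.
have m_gt0 : 0 < m.
  have [R iR] := regenP (Ordinal n_gt0).
  have [|/m_max //] := @Phi_le_covered _ _ _ G [:: (Ordinal n_gt0, R)].
  by rewrite /= iR inE.
have rho_lt : rho G < m.
  suff : rho G <= m.-1 by lia.
  apply/bigmax_leqP => y /andP[/m_max y_le Phiy].
  have := Phi_defined_size Phim; rewrite rankG => mk.
  have [ym|] := eqVneq (y : nat) m; last by lia.
  by move: Phiy; rewrite ym; lia.
by apply: Phi_definedW Phim; lia.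
Qed.

End RankBound.

Section LocalGroups.
Variables (F : finFieldType) (k n : nat) (G : 'M[F]_(k, n)).

(* The parameter [e] is delta - 1: any [e] coordinates of the group are
   regenerated from the rest of it. *)
Definition local_group (S : {set 'I_n}) (r e : nat) : Prop :=
  [/\ e < #|S|, #|S| <= r + e &
      forall E : {set 'I_n}, E \subset S -> #|E| = e ->
        forall j, j \in E -> regen G j ((S :\: E) :|: [set j])].

Definition local_groups_cover (Reg : {set 'I_n}) (r e : nat) : Prop :=
  forall i, i \in Reg -> exists (S : {set 'I_n}) (r' e' : nat),
    [/\ S \subset Reg, i \in S, local_group S r' e', r' <= r & e <= e'].

Lemma local_group_regen S r e i :
  local_group S r e -> 0 < e -> i \in S -> exists R, regen G i R.
Proof.
case=> eS _ S_regen e_gt0 iS.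
have iS1 : [set i] \subset S by rewrite sub1set.
have [|E [iE ES E_card]] := exists_subset_between (m := e) iS1.
  by rewrite cards1 e_gt0 ltnW.
by exists ((S :\: E) :|: [set i]); apply: S_regen => //; rewrite -sub1set.
Qed.

Lemma nontriv_seq_map B X L : uniq L ->
  (forall j, j \in L -> regen G j (X :|: [set j]) /\ j \notin B :|: X) ->
  nontriv_seq G B [seq (j, X :|: [set j]) | j <- L].
Proof.
elim: L B => [|j L IH] B //= /andP[jL L_uniq] L_ok.
have [-> jBX] := L_ok j (mem_head _ _).
move: jBX; rewrite in_setU negb_or => /andP[-> _] /=.
apply: IH => // j' j'L.
have [j'R j'BX] : regen G j' (X :|: [set j']) /\ j' \notin B :|: X.
  by apply: L_ok; rewrite inE j'L orbT.
split=> //; move: j'BX; rewrite !in_setU !negb_or => /andP[-> ->] /=.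
by rewrite andbT inE; apply: contraNN jL => /eqP <-.
Qed.

Lemma covered_map (X : {set 'I_n}) (L : seq 'I_n) :
  covered [seq (j, X :|: [set j]) | j <- L] \subset X :|: [set j in L].
Proof.
rewrite /covered big_map big_seq.
elim/big_ind: _ => [|A A' AX A'X|j jL]; first exact: sub0set.
- by rewrite subUset AX.
- by rewrite subUset subsetUl sub1set !inE jL orbT.
Qed.

Lemma local_group_batch s S r e (E' E : {set 'I_n}) :
  nontriv_seq G set0 s -> local_group S r e -> E' \subset S -> #|E'| = e ->
  E \subset E' :\: covered s ->
  exists b, [/\ size b = #|E|, nontriv_seq G set0 (s ++ b) &
                covered b \subset (S :\: E') :|: E].
Proof.
move=> s_ok [_ _ S_regen] E'S E'_card /subsetP EE'U.
exists [seq (j, (S :\: E') :|: [set j]) | j <- enum E]; split.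
- by rewrite size_map cardE.
- rewrite nontriv_seq_cat s_ok set0U; apply: nontriv_seq_map (enum_uniq _) _ => j.
  rewrite mem_enum => /EE'U; rewrite !inE => /andP[jU jE'].
  by split; [apply: S_regen; rewrite ?inE | rewrite negb_or jU jE'].
- by rewrite (subset_trans (covered_map _ _)) // set_enum.
Qed.

Lemma extend_in_local_group s S r e' e m i :
  nontriv_seq G set0 s -> local_group S r e' -> i \in S :\: covered s ->
  0 < e -> e <= e' -> 0 < m ->
  exists b, [/\ 0 < size b <= m, nontriv_seq G set0 (s ++ b), covered b \subset S &
    #|covered (s ++ b)| <= #|covered s| + size b \/
    #|covered (s ++ b)| <= #|covered s| + r + size b /\ size b = minn e m].
Proof.
move=> s_ok S_loc iA e_gt0 ee' m_gt0; set U := covered s; set A := S :\: U.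
have AS : A \subset S := subsetDl S U.
have [e'S S_le _] := S_loc.
(* Either e' uncovered coordinates are regenerated from the rest of S, or all
   uncovered ones are completed to an e'-set E' with S :\: E' already covered. *)
have [A_dense | A_sparse] := leqP e' #|A|.
- have [E' E'A E'_card] := exists_subset_card A_dense.
  have [|E EE' E_card] := @exists_subset_card _ E' (minn e m).
    by rewrite E'_card geq_min ee'.
  have E'S := subset_trans E'A AS.
  have [|b [b_size b_ok b_cov]] := local_group_batch s_ok S_loc E'S E'_card (E := E).
    by rewrite subsetD EE'; move: (subset_trans EE' E'A); rewrite subsetD => /andP[].
  exists b; rewrite covered_cat -/U b_size; split=> //.
  + by rewrite E_card leq_min e_gt0 m_gt0 geq_minr.
  + by rewrite (subset_trans b_cov) // subUset subsetDl (subset_trans EE').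
  + right; split; last by rewrite E_card.
    apply: leq_trans (subset_leq_card (setUS U b_cov)) _.
    apply: leq_trans (leq_card_setU _ _).1 _; rewrite -addnA leq_add2l.
    apply: leq_trans (leq_card_setU _ _).1 _; rewrite leq_add2r cardsDS // E'_card.
    by rewrite leq_subLR addnC.
- have [|E' [AE' E'S E'_card]] := exists_subset_between (m := e') AS.
    by rewrite (ltnW A_sparse) (ltnW e'S).
  have [E EA E_card] := @exists_subset_card _ A (minn #|A| m) (geq_minl _ _).
  have [|b [b_size b_ok b_cov]] := local_group_batch s_ok S_loc E'S E'_card (E := E).
    by rewrite subsetD (subset_trans EA AE'); move: EA; rewrite subsetD => /andP[].
  have b_covU : covered b \subset U :|: E.
    apply: subset_trans b_cov (setSU _ _); apply/subsetP=> x.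
    rewrite !inE => /andP[xE' xS]; apply: contraNT xE' => xU.
    by rewrite (subsetP AE') // !inE xU.
  exists b; rewrite covered_cat -/U b_size; split=> //.
  + have A_gt0 : 0 < #|A| by apply/card_gt0P; exists i.
    by rewrite E_card leq_min A_gt0 m_gt0 geq_minr.
  + by rewrite (subset_trans b_cov) // subUset subsetDl (subset_trans EA).
  + left; apply: leq_trans (subset_leq_card (setUS U b_covU)) _.
    by rewrite setUA setUid (leq_card_setU _ _).1.
Qed.

Definition nontriv_extension s0 (Reg : {set 'I_n}) y m : Prop :=
  exists b, [/\ size b = y, nontriv_seq G set0 (s0 ++ b), covered b \subset Reg &
                #|covered (s0 ++ b)| <= m].

Section Greedy.
Variables (s0 : seq ('I_n * {set 'I_n})) (Reg : {set 'I_n}) (R e y : nat).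
Hypothesis s0_ok : nontriv_seq G set0 s0.
Hypothesis e_gt0 : 0 < e.
Hypothesis Reg_groups : local_groups_cover Reg R e.
Hypothesis room : forall y', y' < y -> y' + R * cdiv y' e < #|Reg :\: covered s0|.

Local Notation target :=
  (nontriv_extension s0 Reg y (#|covered s0| + y + R * cdiv y e)).

(* q counts the batches of cost R; each of them appended e coordinates. *)
Definition greedy_inv b q : Prop :=
  [/\ nontriv_seq G set0 (s0 ++ b), covered b \subset Reg, q * e <= size b &
      #|covered s0 :|: covered b| <= #|covered s0| + size b + R * q].

Lemma greedy_done b q : greedy_inv b q -> size b = y -> target.
Proof.
case=> b_ok b_Reg q_b b_card b_y; exists b; rewrite covered_cat; split=> //.
rewrite -b_y (leq_trans b_card) // leq_add2l leq_mul2l leq_mul_cdiv ?orbT //.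
Qed.

Lemma greedy_step b q rem : greedy_inv b q -> size b + rem = y -> 0 < rem ->
  target \/ exists c q', 0 < size c <= rem /\ greedy_inv (b ++ c) q'.
Proof.
case=> b_ok b_Reg q_b b_card b_rem rem_gt0.
have q_cdiv : q <= cdiv (size b) e := leq_mul_cdiv e_gt0 q_b.
have b_lt : size b < y by rewrite -b_rem -addn1 leq_add2l.
have [i iReg iU] : exists2 i, i \in Reg & i \notin covered (s0 ++ b).
  apply: (@exists_uncovered _ (covered s0)); rewrite covered_cat ?subsetUl //.
  have := room b_lt; have := leq_mul (leqnn R) q_cdiv; lia.
have [S [r' [e' [SReg iS S_loc r'R ee']]]] := Reg_groups iReg.
have iSU : i \in S :\: covered (s0 ++ b) by rewrite inE iU iS.
have [c [c_size c_ok c_S c_card]] :=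
  extend_in_local_group b_ok S_loc iSU e_gt0 ee' rem_gt0.
rewrite -catA in c_ok; rewrite !covered_cat in c_card.
have bc_Reg : covered (b ++ c) \subset Reg.
  by rewrite covered_cat subUset b_Reg (subset_trans c_S SReg).
case: c_card => [c_free | [c_card c_min]].
  right; exists c, q; split=> //; split; rewrite // size_cat ?covered_cat ?setUA.
    by rewrite (leq_trans q_b) ?leq_addr.
  by apply: leq_trans c_free _; rewrite addnA addnAC leq_add2r.
have [e_le | e_gt] := leqP e rem.
  rewrite (minn_idPl e_le) in c_min; right; exists c, q.+1; split=> //.
  split; rewrite // size_cat ?covered_cat ?setUA.
    by rewrite mulSn c_min addnC leq_add2r.
  apply: leq_trans c_card _.
  apply: leq_trans (leq_add (leq_add b_card r'R) (leqnn _)) _.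
  by rewrite -[_ + R * q + R]addnA -mulnSr addnAC addnA.
rewrite (minn_idPr (ltnW e_gt)) in c_min.
have q_lt : q < cdiv y e by apply: ltn_mul_cdiv => //; apply: leq_ltn_trans q_b b_lt.
left; exists (b ++ c); split=> //; first by rewrite size_cat c_min.
rewrite !covered_cat setUA; apply: leq_trans c_card _; rewrite c_min -{1}b_rem addnA.
apply: leq_trans (leq_add (leq_add b_card r'R) (leqnn rem)) _.
by rewrite -[_ + R * q + R]addnA -mulnSr addnAC leq_add2l leq_mul2l q_lt orbT.
Qed.

Lemma greedy_extend : target.
Proof.
suff grow : forall rem b q, size b + rem = y -> greedy_inv b q -> target.
  apply: (grow y [::] 0) => //.
  by split; rewrite ?cats0 ?covered_nil ?setU0 ?sub0set ?muln0 ?addn0.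
elim/ltn_ind=> rem IH b q b_rem b_inv.
have [rem0 | rem_gt0] := posnP rem.
  by apply: (greedy_done b_inv); rewrite -b_rem rem0 addn0.
case: (greedy_step b_inv b_rem rem_gt0) => [//|[c [q' [/andP[c_gt0 c_le] bc_inv]]]].
apply: (IH (rem - size c) _ (b ++ c) q') => //; first by rewrite ltn_subrL c_gt0.
by rewrite size_cat -addnA subnKC.
Qed.

End Greedy.

End LocalGroups.

Lemma DeltaS n (T : nat -> {set 'I_n}) r delta j :
  Delta T r delta j.+1 = Delta T r delta j + nblk T r delta j * (delta j - 1).
Proof. by rewrite /Delta big_ord_recr. Qed.

Lemma RsumS n (T : nat -> {set 'I_n}) r delta j :
  Rsum T r delta j.+1 = Rsum T r delta j + r j * nblk T r delta j.
Proof. by rewrite /Rsum big_ord_recr. Qed.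

Section MultipleLocalities.
Variables (F : finFieldType) (k n : nat) (G : 'M[F]_(k, n)).
Variables (s : nat) (T : nat -> {set 'I_n}) (r delta : nat -> nat).
Hypothesis T_partition : is_partition s T.
Hypothesis r_delta_monotone :
  forall i j, i <= j -> j < s -> r i <= r j /\ delta j <= delta i.
Hypothesis delta_gt1 : forall i, i < s -> 1 < delta i.
Hypothesis localities : multi_locality G s T r delta.
Hypothesis block_room : forall j, j.+1 < s ->
  let D := Delta T r delta j.+1 - Delta T r delta j - 1 in
  r j * cdiv D (delta j - 1) + D < #|T j|.

Local Notation Del := (Delta T r delta).
Local Notation Rs := (Rsum T r delta).

Lemma block_groups_cover i :
  i < s -> local_groups_cover G (T i) (r i) (delta i - 1).
Proof.
move=> i_lt iota iota_i.
have [S [ST iS S_ge S_le S_regen]] := localities i_lt iota_i.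
have d_gt0 : 0 < delta i := ltnW (delta_gt1 i_lt).
exists S, (r i), (delta i - 1); split=> //; split=> //.
- by apply: leq_trans S_ge; rewrite ltn_subrL d_gt0.
- by rewrite addnBA.
Qed.

Lemma all_groups_cover : 0 < s ->
  local_groups_cover G setT (r s.-1) (delta s.-1 - 1).
Proof.
move=> s_gt0 iota _; case: T_partition => cover _ _.
have [i i_lt iota_i] := cover iota.
have [S [r' [e' [ST iS S_loc r'_le e'_ge]]]] := block_groups_cover i_lt iota_i.
have [r_le d_le] : r i <= r s.-1 /\ delta s.-1 <= delta i.
  by apply: r_delta_monotone; rewrite ?ltn_predL // -ltnS prednK.
exists S, r', e'; split; rewrite ?subsetT //.
- exact: leq_trans r'_le r_le.
- exact: leq_trans (leq_sub2r 1 d_le) e'_ge.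
Qed.

Lemma regen_exists iota : exists R, regen G iota R.
Proof.
case: T_partition => cover _ _; have [i i_lt iota_i] := cover iota.
have [S [r' [e' [_ iS S_loc _ e'_ge]]]] := block_groups_cover i_lt iota_i.
apply: (local_group_regen S_loc _ iS); apply: leq_trans e'_ge.
by rewrite subn_gt0 delta_gt1.
Qed.

Lemma block_disjoint_prefix j : j < s -> [disjoint \bigcup_(i < j) T i & T j].
Proof.
case: T_partition => _ disj _ j_lt; rewrite -setI_eq0; apply/eqP/setP => x.
rewrite !inE andbC; apply/negP => /andP[xTj /bigcupP[i _ xTi]].
have ij : (i : nat) <> j by move=> ij; move: (ltn_ord i); rewrite ij ltnn.
have := disj i j (ltn_trans (ltn_ord i) j_lt) j_lt ij.
by move=> /disjointFr/(_ xTi); rewrite xTj.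
Qed.

Lemma extend_in_block j s0 y : j.+1 < s -> nontriv_seq G set0 s0 ->
  covered s0 \subset \bigcup_(i < j) T i -> y <= nblk T r delta j * (delta j - 1) ->
  nontriv_extension G s0 (T j) y (#|covered s0| + y + r j * cdiv y (delta j - 1)).
Proof.
move=> j_lt s0_ok s0_prefix y_le; have j_lt' : j < s := ltnW j_lt.
apply: greedy_extend => //; [by rewrite subn_gt0 delta_gt1 | exact: block_groups_cover |].
have -> : T j :\: covered s0 = T j.
  apply/setDidPl; rewrite disjoint_sym.
  exact: disjointWl s0_prefix (block_disjoint_prefix j_lt').
move=> y' y'_lt; have := block_room j_lt; rewrite /= DeltaS.
set D := (_ - _ - 1).
have y'D : y' <= D by rewrite /D; lia.
have := leq_mul (leqnn (r j)) (leq_cdiv2r (delta j - 1) y'D); lia.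
Qed.

Lemma fill_prefix_blocks j : j < s ->
  exists s0, [/\ size s0 = Del j, nontriv_seq G set0 s0,
    covered s0 \subset \bigcup_(i < j) T i & #|covered s0| <= Rs j + Del j].
Proof.
elim: j => [_|j IH j_lt].
  by exists [::]; rewrite /Delta /Rsum !big_ord0 covered_nil sub0set cards0.
have [s0 [s0_size s0_ok s0_prefix s0_card]] := IH (ltnW j_lt).
have [b [b_size b_ok b_Tj b_card]] := extend_in_block j_lt s0_ok s0_prefix (leqnn _).
have e_gt0 : 0 < delta j - 1 by rewrite subn_gt0 delta_gt1 // ltnW.
exists (s0 ++ b); split=> //.
- by rewrite size_cat s0_size b_size DeltaS.
- by rewrite covered_cat big_ord_recr setUSS.
- apply: leq_trans b_card _; rewrite cdiv_mulnK // RsumS DeltaS; lia.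
Qed.

Lemma Phi_le_block j x : j.+1 < s -> Del j <= x <= Del j.+1 ->
  Phi_defined G x /\ Phi G x <= Rs j + r j * cdiv (x - Del j) (delta j - 1) + x.
Proof.
move=> j_lt /andP[x_ge x_le].
have [s0 [s0_size s0_ok s0_prefix s0_card]] := fill_prefix_blocks (ltnW j_lt).
have [|b [b_size b_ok _ b_card]] :=
  extend_in_block (y := x - Del j) j_lt s0_ok s0_prefix.
  by rewrite leq_subLR -DeltaS.
have [Phi_def Phi_le] := Phi_le_covered b_ok.
rewrite size_cat s0_size b_size subnKC // in Phi_def Phi_le.
split=> //; apply: leq_trans Phi_le _; apply: leq_trans b_card _; lia.
Qed.

Lemma Phi_le_last x : 0 < s -> Del s.-1 <= x ->
  Phi G x <= Rs s.-1 + r s.-1 * cdiv (x - Del s.-1) (delta s.-1 - 1) + x.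
Proof.
move=> s_gt0 x_ge.
set y := x - Del s.-1; set R := r s.-1; set e := delta s.-1 - 1.
have [|s0 [s0_size s0_ok _ s0_card]] := fill_prefix_blocks (j := s.-1).
  by rewrite ltn_predL.
have [n_le | lt_n] := leqP n (#|covered s0| + y + R * cdiv y e).
  by apply: leq_trans (Phi_le_n G x) _; lia.
have e_gt0 : 0 < e by rewrite subn_gt0 delta_gt1 // ltn_predL.
have [|b [b_size b_ok _ b_card]] :=
  greedy_extend (y := y) s0_ok e_gt0 (all_groups_cover s_gt0).
  move=> y' y'_lt; rewrite setTD; have := cardsC (covered s0); rewrite card_ord.
  have := leq_mul (leqnn R) (leq_cdiv2r e (ltnW y'_lt)); lia.
have [_] := Phi_le_covered b_ok.
rewrite size_cat s0_size b_size subnKC // => Phi_le.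
apply: leq_trans Phi_le _; apply: leq_trans b_card _; lia.
Qed.

End MultipleLocalities.

Unset Implicit Arguments.
Theorem lemma2 (F : finFieldType) (k n : nat) (G : 'M[F]_(k, n))
  (s : nat) (T : nat -> {set 'I_n}) (r delta : nat -> nat) :
  (2 <= s)%N ->
  \rank G = k ->
  is_partition s T ->
  (forall i j, (i <= j)%N -> (j < s)%N -> (r i <= r j)%N /\ (delta j <= delta i)%N) ->
  (forall i, (i < s)%N -> (2 <= delta i)%N) ->
  multi_locality G s T r delta ->
  (Rsum T r delta s.-1 + 1 <= k)%N ->
  (forall j, (j.+1 < s)%N ->
     let D := (Delta T r delta j.+1 - Delta T r delta j - 1)%N in
     (r j * cdiv D (delta j - 1) + D < #|T j|)%N) ->
  (forall j x, (j.+1 < s)%N ->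
     (Delta T r delta j <= x <= Delta T r delta j.+1)%N ->
     Phi_defined G x /\
     (Phi G x <= Rsum T r delta j
                 + r j * cdiv (x - Delta T r delta j) (delta j - 1) + x)%N) /\
  (forall x,
     (Delta T r delta s.-1 <= x <= (rho G).+1)%N ->
     Phi_defined G x /\
     (Phi G x <= Rsum T r delta s.-1
                 + r s.-1 * cdiv (x - Delta T r delta s.-1) (delta s.-1 - 1) + x)%N).
Proof.
move=> s_ge2 rankG T_part monotone delta_ge2 loc Rsum_lt room.
have s_gt0 : 0 < s by apply: ltnW s_ge2.
split=> [|x /andP[x_ge x_le]]; first exact: Phi_le_block T_part delta_ge2 loc room.
split; last exact: Phi_le_last T_part monotone delta_ge2 loc room x s_gt0 x_ge.
apply: (Phi_defined_upto_rho rankG _ (regen_exists T_part delta_ge2 loc) x_le).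
by apply: leq_trans (rank_leq_col G); rewrite rankG (leq_trans _ Rsum_lt) ?leq_addl.
Qed.
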